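(* For all positive integers $d$ and $k$ and every finite graph $G$ with $\alpha^{\ast}(G)\le d$ and $\mathsf{rw}(G)\le k$, we have $\alpha\text{-}\mathsf{tw}(G)\le 3dk$.
   Context: $\alpha^{\ast}(G)=\max_{v}\alpha(G[N[v]])$ (local independence number). $\alpha\text{-}\mathsf{tw}(G)$ is the minimum, over all tree-decompositions $(T,\beta)$ of $G$, of $\max_t\alpha(G[\beta(t)])$. For $X\subseteq V(G)$, the cutrank of $X$ is the $\mathbb{F}_2$-rank of the submatrix of the adjacency matrix with rows $X$ and columns $V(G)\setminus X$. A rank-decomposition of $G$ is a pair $(T,\delta)$ with $T$ a tree whose internal nodes have degree $3$ and $\delta$ a bijection from the leaves of $T$ to $V(G)$; each edge $e$ of $T$ splits the leaves into two sides, and its cutrank is the cutrank of the image under $\delta$ of one side. The width is the maximum cutrank of an edge of $T$, and the rankwidth $\mathsf{rw}(G)$ is the minimum width of a rank-decomposition. *)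

From mathcomp Require Import all_boot all_order all_algebra.
Set Implicit Arguments. Unset Strict Implicit. Unset Printing Implicit Defensive.
Import GRing.Theory.

Definition simple_graph (V : finType) (e : rel V) : Prop :=
  symmetric e /\ irreflexive e.

Definition independent (V : finType) (e : rel V) (S : {set V}) : bool :=
  [forall x in S, forall y in S, ~~ e x y].

Definition alpha (V : finType) (e : rel V) (A : {set V}) : nat :=
  \max_(S : {set V} | (S \subset A) && independent e S) #|S|.

Definition cnbhd (V : finType) (e : rel V) (v : V) : {set V} :=
  v |: [set u | e v u].

Definition alpha_star (V : finType) (e : rel V) : nat :=
  \max_(v : V) alpha e (cnbhd e v).

Definition has_cycle (N : finType) (t : rel N) : Prop :=
  exists (x : N) (p : seq N),
    [&& path t x p, uniq (x :: p), 2 <= size p & t (last x p) x].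

Definition is_tree (N : finType) (t : rel N) : Prop :=
  [/\ 0 < #|N|, symmetric t, irreflexive t,
      (forall a b : N, connect t a b) & ~ has_cycle t].

Definition tree_decomposition (V : finType) (e : rel V)
    (N : finType) (t : rel N) (beta : N -> {set V}) : Prop :=
  [/\ is_tree t,
      (forall v : V, exists n : N, v \in beta n),
      (forall u v : V, e u v -> exists n : N, (u \in beta n) && (v \in beta n)) &
      (forall (v : V) (a b : N), v \in beta a -> v \in beta b ->
         connect (fun x y => [&& t x y, v \in beta x & v \in beta y]) a b)].

(* alpha-tw(G) <= w  :  the minimum over tree decompositions of the maximum
   alpha of a bag is at most w, i.e. some tree decomposition has all bags
   with alpha at most w. *)
Definition alpha_tw_le (V : finType) (e : rel V) (w : nat) : Prop :=
  exists (N : finType) (t : rel N) (beta : N -> {set V}),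
    tree_decomposition e t beta /\ forall n : N, alpha e (beta n) <= w.

Definition cut_matrix (V : finType) (e : rel V) (X : {set V})
    : 'M['F_2]_(#|X|, #|~: X|) :=
  \matrix_(i < #|X|, j < #|~: X|)
     ((e (enum_val i) (enum_val j) : nat)%:R)%R.

Definition cutrank (V : finType) (e : rel V) (X : {set V}) : nat :=
  \rank (cut_matrix e X).

Definition degree (N : finType) (t : rel N) (n : N) : nat := #|[set m | t n m]|.

Definition is_leaf (N : finType) (t : rel N) (n : N) : bool := degree t n <= 1.

Definition edge_side (N : finType) (t : rel N) (a b : N) : {set N} :=
  [set x | connect (fun x y => [&& t x y, ~~ ((x == a) && (y == b))
                                        & ~~ ((x == b) && (y == a))]) a x].

(* A rank-decomposition (T, delta) of G, given via the inverse bijection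
   lam : V -> leaves of T. *)
Definition rank_decomposition (V : finType) (N : finType) (t : rel N)
    (lam : V -> N) : Prop :=
  [/\ is_tree t,
      (forall n : N, ~~ is_leaf t n -> degree t n = 3),
      injective lam &
      (forall n : N, is_leaf t n <-> exists v : V, lam v = n)].

Definition rd_width_le (V : finType) (e : rel V) (N : finType) (t : rel N)
    (lam : V -> N) (k : nat) : Prop :=
  forall a b : N, t a b ->
    cutrank e [set v | lam v \in edge_side t a b] <= k.

(* rw(G) <= k; graphs with at most one vertex have rankwidth 0 by convention *)
Definition rankwidth_le (V : finType) (e : rel V) (k : nat) : Prop :=
  #|V| <= 1 \/
  exists (N : finType) (t : rel N) (lam : V -> N),
    rank_decomposition t lam /\ rd_width_le e t lam k.

From mathcomp Require Import all_boot all_order all_algebra.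
Set Implicit Arguments. Unset Strict Implicit. Unset Printing Implicit Defensive.
Import GRing.Theory.

(* Let (T, lam) be a rank-decomposition of width k and, for an edge mn of T,
   let X(m,n) be the set of vertices whose leaf lies on the side of m.  The bag
   of a node n holds the vertex at n and, for every neighbour m of n, the
   vertices of X(m,n) with a neighbour outside X(m,n).  A vertex in the bag of n
   is in every bag on the tree path from n to its own leaf, so the bags form a
   tree-decomposition.  Over F_2, a column basis of the cut matrix of X gives at
   most cutrank(X) <= k vertices outside X dominating every vertex of X that has
   a neighbour outside X; hence those vertices lie in k closed neighbourhoods
   and contain no independent set of more than k d vertices.  Every node of T
   has degree at most 3, so every bag has independence number at most 3 d k. *)

Lemma maxrankfun_col_neq0 (F : fieldType) m n (A : 'M[F]_(m, n)) i j :
  A i j != 0%R -> exists l, A (maxrankfun A l) j != 0%R.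
Proof.
move=> Aij_neq0; apply/existsP; apply: contraR Aij_neq0 => /existsPn col0.
have /submxP [D ->] : (A <= rowsub (maxrankfun A) A)%MS by rewrite eq_maxrowsub.
rewrite mxE big1 // => l _; move/negbNE/eqP: (col0 l).
by rewrite mxE => ->; rewrite mulr0.
Qed.

Section Independence.
Variables (V : finType) (e : rel V).

Lemma independentS (S T : {set V}) :
  S \subset T -> independent e T -> independent e S.
Proof.
move=> /subsetP sST /forall_inP indT; apply/forall_inP => x xS.
by apply/forall_inP => y yS; apply: (forall_inP (indT x (sST x xS))); apply: sST.
Qed.

Lemma card_le_alpha (A S : {set V}) :
  S \subset A -> independent e S -> #|S| <= alpha e A.
Proof.
move=> sSA indS.
pose P (S : {set V}) := (S \subset A) && independent e S.
by apply: (@leq_bigmax_cond _ P (fun S => #|S|)); rewrite /P sSA.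
Qed.

Lemma alpha_le_card (A : {set V}) : alpha e A <= #|A|.
Proof. by apply/bigmax_leqP => S /andP [sSA _]; apply: subset_leq_card. Qed.

Lemma alphaS (A B : {set V}) : A \subset B -> alpha e A <= alpha e B.
Proof.
move=> sAB; apply/bigmax_leqP => S /andP [sSA indS].
by apply: card_le_alpha indS; apply: subset_trans sAB.
Qed.

Lemma alphaU (A B : {set V}) : alpha e (A :|: B) <= alpha e A + alpha e B.
Proof.
apply/bigmax_leqP => S /andP [sSAB indS].
rewrite -(setIidPl sSAB) setIUr (leq_trans (leq_card_setU _ _)) //.
by apply: leq_add; apply: card_le_alpha (subsetIr _ _) (independentS (subsetIl _ _) indS).
Qed.

Lemma alpha_bigcup (I : finType) (P : pred I) (F : I -> {set V}) :
  alpha e (\bigcup_(i | P i) F i) <= \sum_(i | P i) alpha e (F i).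
Proof.
apply: (big_ind2 (fun A s => alpha e A <= s)) => //.
- by rewrite -(cards0 V) alpha_le_card.
- by move=> A1 s1 A2 s2 le1 le2; apply: leq_trans (alphaU _ _) (leq_add le1 le2).
Qed.

Lemma alpha_cnbhd_le (v : V) : alpha e (cnbhd e v) <= alpha_star e.
Proof. exact: (leq_bigmax (F := fun v => alpha e (cnbhd e v))). Qed.

End Independence.

Section Cutrank.
Variables (V : finType) (e : rel V).

Lemma cutrank_dominating_set (X : {set V}) :
  exists2 J : {set V}, #|J| <= cutrank e X &
    forall a w, a \in X -> w \notin X -> e a w -> exists2 b, b \in J & e a b.
Proof.
pose A := (cut_matrix e X)^T%R.
exists [set enum_val (maxrankfun A l) | l : 'I_(\rank A)].
  by rewrite (leq_trans (leq_imset_card _ _)) // card_ord mxrank_tr.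
move=> a w aX wX eaw; have wXC : w \in ~: X by rewrite in_setC.
have Awa : A (enum_rank_in wXC w) (enum_rank_in aX a) != 0%R.
  by rewrite !mxE !enum_rankK_in // eaw oner_eq0.
have [l] := maxrankfun_col_neq0 Awa.
rewrite !mxE enum_rankK_in //; case: (boolP (e a _)) => // eab _.
by exists (enum_val (maxrankfun A l)); first by apply: imset_f.
Qed.

Definition boundary (X : {set V}) : {set V} :=
  [set a in X | [exists w, (w \notin X) && e a w]].

Lemma alpha_boundary (X : {set V}) : symmetric e ->
  alpha e (boundary X) <= cutrank e X * alpha_star e.
Proof.
move=> esym; have [J cardJ domJ] := cutrank_dominating_set X.
have sub : boundary X \subset \bigcup_(b in J) cnbhd e b.
  apply/subsetP => a; rewrite inE => /andP [aX /existsP [w /andP [wX eaw]]].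
  have [b bJ eab] := domJ a w aX wX eaw.
  by apply/bigcupP; exists b; rewrite // !inE esym eab orbT.
rewrite (leq_trans (alphaS e sub)) // (leq_trans (alpha_bigcup _ _ _)) //.
rewrite (@leq_trans (\sum_(b in J) alpha_star e)) //.
  by apply: leq_sum => b _; apply: alpha_cnbhd_le.
by rewrite sum_nat_const leq_mul2r cardJ orbT.
Qed.

End Cutrank.
Section EdgeSides.
Variables (N : finType) (t : rel N).
Hypothesis tree_t : is_tree t.

Definition del_edge (a b : N) : rel N := fun x y =>
  [&& t x y, ~~ ((x == a) && (y == b)) & ~~ ((x == b) && (y == a))].

Let t_sym : symmetric t. Proof. by case: tree_t. Qed.
Let t_irr : irreflexive t. Proof. by case: tree_t. Qed.

Lemma edge_sideE a b x : (x \in edge_side t a b) = connect (del_edge a b) a x.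
Proof. by rewrite inE. Qed.

Lemma mem_edge_side a b : a \in edge_side t a b.
Proof. by rewrite edge_sideE connect0. Qed.

Lemma del_edgeC a b : del_edge a b =2 del_edge b a.
Proof. by move=> x y; rewrite /del_edge; congr (_ && _); rewrite andbC. Qed.

Lemma del_edge_sym a b : symmetric (del_edge a b).
Proof.
move=> x y; rewrite /del_edge t_sym; congr (_ && _).
by rewrite andbC (andbC (x == a)) (andbC (x == b)).
Qed.

Lemma del_edge_sub a b : subrel (del_edge a b) t.
Proof. by move=> x y /andP []. Qed.

Lemma path_del_edge a b y p :
  path t y p -> a \notin y :: p -> path (del_edge a b) y p.
Proof.
elim: p y => //= z p IHp y /andP [tyz tp]; rewrite !inE !negb_or.
case/and3P=> ay az ap; rewrite IHp ?inE ?negb_or ?az // andbT /del_edge tyz.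
by rewrite ![_ == a]eq_sym (negPf ay) (negPf az) andbF.
Qed.

Lemma edge_side_first_step (r : rel N) a x :
  subrel r t -> connect r a x -> x != a -> exists2 m, r a m & x \in edge_side t m a.
Proof.
move=> sub_rt /connectP [p r_p ->].
case/shortenP: r_p => [[|m q]] //=; first by rewrite eqxx.
case/andP=> ram r_q /andP [aq _] _ _; exists m => //.
rewrite edge_sideE; apply/connectP; exists q => //.
by rewrite (eq_path (del_edgeC m a)) path_del_edge // (sub_path sub_rt).
Qed.

Lemma edge_side_toward a x : x != a -> exists2 m, t a m & x \in edge_side t m a.
Proof. by apply: edge_side_first_step; last by case: tree_t. Qed.

Lemma edge_side_next m n x : x \in edge_side t m n -> x != m ->
  exists2 n', t m n' && (n' != n) & x \in edge_side t n' m.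
Proof.
rewrite edge_sideE => con_x xm.
have [n' /and3P [tmn' nn' _] side_x] := edge_side_first_step (@del_edge_sub m n) con_x xm.
exists n' => //; rewrite tmn'.
by apply: contra nn' => /eqP ->; rewrite !eqxx.
Qed.

Lemma edge_side_notin a b : t a b -> b \notin edge_side t a b.
Proof.
move=> tab; rewrite edge_sideE; apply/negP => /connectP [p del_p].
case/shortenP: del_p => p' del_p' uniq_p' _ last_p'.
case: tree_t => _ _ _ _; apply; exists a, p'.
rewrite (sub_path (@del_edge_sub a b) del_p') uniq_p' -last_p' t_sym tab andbT /=.
case: p' del_p' uniq_p' last_p' => [|y [|z q]] //= => [_ _ ba|].
  by rewrite ba t_irr in tab.
by rewrite andbT /del_edge => /and3P [_ /negP ab _] _ yb; case: ab; rewrite yb !eqxx.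
Qed.

Lemma edge_side_sub m n n' :
  t m n' -> n' != n -> edge_side t n' m \subset edge_side t m n.
Proof.
move=> tmn' n'n; apply/subsetP => x; rewrite !edge_sideE => /connectP [p del_p ->].
have mp : m \notin n' :: p.
  apply/negP => /(path_connect del_p) con_n'm.
  have tn'm : t n' m by rewrite t_sym.
  by move: (edge_side_notin tn'm); rewrite edge_sideE con_n'm.
have del_mn' : del_edge m n m n'.
  rewrite /del_edge tmn' eqxx (negPf n'n) /=.
  by apply: contraFN (t_irr m) => /andP [_ /eqP n'm]; rewrite -{2}n'm.
apply: connect_trans (connect1 del_mn') _; apply/connectP; exists p => //.
by apply: path_del_edge mp; apply: sub_path del_p; apply: del_edge_sub.
Qed.

Lemma edge_side_proper m n n' :
  t m n' -> n' != n -> edge_side t n' m \proper edge_side t m n.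
Proof.
move=> tmn' n'n; rewrite properE edge_side_sub //=.
by apply/subsetPn; exists m; rewrite ?mem_edge_side ?edge_side_notin // t_sym.
Qed.

Lemma edge_side_cover a b x :
  t a b -> (x \in edge_side t a b) || (x \in edge_side t b a).
Proof.
move=> tab; have [->|xa] := eqVneq x a; first by rewrite mem_edge_side.
have [m tam side_x] := edge_side_toward xa.
have [<-|mb] := eqVneq m b; first by rewrite side_x orbT.
by rewrite (subsetP (edge_side_sub tam mb)).
Qed.

Lemma edge_side_disjoint a b x :
  t a b -> x \in edge_side t a b -> x \notin edge_side t b a.
Proof.
move=> tab; rewrite !edge_sideE (eq_connect (del_edgeC b a)) => con_ax.
apply/negP => con_bx; move/negP: (edge_side_notin tab); apply.
by rewrite edge_sideE (connect_trans con_ax) // (sym_connect_sym (@del_edge_sym a b)).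
Qed.

End EdgeSides.

Section Bags.
Variables (V : finType) (e : rel V) (N : finType) (t : rel N) (lam : V -> N).

Definition vertex_side (a b : N) : {set V} := [set v | lam v \in edge_side t a b].

Definition bag (n : N) : {set V} :=
  [set v | lam v == n] :|: \bigcup_(m | t n m) boundary e (vertex_side m n).

Definition bag_edge (v : V) : rel N := fun x y => [&& t x y, v \in bag x & v \in bag y].

Lemma mem_bag_lam v : v \in bag (lam v).
Proof. by rewrite !inE eqxx. Qed.

Lemma bag_edge_sym v : symmetric t -> symmetric (bag_edge v).
Proof. by move=> t_sym x y; rewrite /bag_edge t_sym; congr (_ && _); rewrite andbC. Qed.

Lemma alpha_bag n : symmetric e -> alpha e (bag n) <=
  #|[set v | lam v == n]| + \sum_(m | t n m) cutrank e (vertex_side m n) * alpha_star e.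
Proof.
move=> e_sym; rewrite (leq_trans (alphaU _ _ _)) // leq_add ?alpha_le_card //.
apply: leq_trans (alpha_bigcup _ _ _) _; apply: leq_sum => m _.
exact: alpha_boundary.
Qed.

Lemma alpha_bag_rank_decomposition d k n :
  symmetric e -> rank_decomposition t lam -> rd_width_le e t lam k ->
  alpha_star e <= d -> 0 < d * k -> alpha e (bag n) <= 3 * d * k.
Proof.
move=> e_sym [[_ t_sym _ _ _] deg3 lam_inj leafP] width le_d dk_gt0.
have le_sum : \sum_(m | t n m) cutrank e (vertex_side m n) * alpha_star e
    <= degree t n * (k * d).
  rewrite /degree -sum_nat_cond_const; apply: leq_sum => m tnm.
  by apply: leq_mul => //; apply: width; rewrite t_sym.
apply: leq_trans (alpha_bag n e_sym) _; apply: leq_trans (leq_add (leqnn _) le_sum) _.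
have [leaf_n|inner_n] := boolP (is_leaf t n).
  have le1 : #|[set v | lam v == n]| <= 1.
    by apply/card_le1_eqP => x y; rewrite !inE => /eqP <- /eqP /lam_inj.
  apply: leq_trans (leq_add le1 (leq_mul leaf_n (leqnn _))) _.
  by rewrite mul1n -mulnA mulSn (mulnC k) addnC leq_add2l muln_gt0.
have -> : #|[set v | lam v == n]| = 0.
  apply: eq_card0 => v; rewrite !inE; apply/negP => /eqP lvn.
  by move: inner_n; rewrite -lvn; apply/negP/negPn/leafP; exists v.
by rewrite deg3 // -mulnA (mulnC k).
Qed.

Hypothesis tree_t : is_tree t.

Let t_sym : symmetric t. Proof. by case: tree_t. Qed.

Lemma mem_bag_boundary n m v w : t n m ->
  lam v \in edge_side t m n -> lam w \in edge_side t n m -> e v w -> v \in bag n.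
Proof.
move=> tnm side_v side_w evw; rewrite inE; apply/orP; right.
apply/bigcupP; exists m => //; rewrite inE inE side_v; apply/existsP; exists w.
by rewrite evw andbT inE (edge_side_disjoint tree_t tnm side_w).
Qed.

Lemma bagP n v : v \in bag n -> lam v = n \/
  exists m w, [/\ t n m, lam v \in edge_side t m n, lam w \in edge_side t n m & e v w].
Proof.
case/setUP => [|/bigcupP [m tnm]]; first by rewrite inE => /eqP; left.
rewrite inE inE => /andP [side_v /existsP [w /andP [side_w evw]]]; right; exists m, w.
have tmn : t m n by rewrite t_sym.
split=> //; move: side_w; rewrite inE.
by case/orP: (edge_side_cover tree_t (lam w) tmn) => ->.
Qed.

Lemma bag_cover_edge u v : e u v -> exists n, (u \in bag n) && (v \in bag n).
Proof.
move=> euv; exists (lam v); rewrite mem_bag_lam andbT.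
have [<-|uv] := eqVneq (lam u) (lam v); first exact: mem_bag_lam.
have [m tvm side_u] := edge_side_toward tree_t uv.
exact: mem_bag_boundary tvm side_u (mem_edge_side _ _ _) euv.
Qed.

Lemma connect_bag_toward v w s n m : #|edge_side t m n| < s -> t n m ->
  lam v \in edge_side t m n -> lam w \in edge_side t n m -> e v w ->
  connect (bag_edge v) n (lam v).
Proof.
elim: s n m => // s IHs n m lt_s tnm side_v side_w evw.
rewrite ltnS in lt_s.
have vn := mem_bag_boundary tnm side_v side_w evw.
have [lvm|lvm] := eqVneq (lam v) m.
  by apply: connect1; rewrite /bag_edge vn mem_bag_lam lvm tnm.
have [n' /andP [tmn' n'n] side_v'] := edge_side_next side_v lvm.
have tmn : t m n by rewrite t_sym.
have nn' : n != n' by rewrite eq_sym.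
have side_w' := subsetP (edge_side_sub tree_t tmn nn') _ side_w.
have vm := mem_bag_boundary tmn' side_v' side_w' evw.
apply: connect_trans (connect1 (_ : bag_edge v n m)) _.
  by rewrite /bag_edge tnm vn vm.
have lt_side : #|edge_side t n' m| < #|edge_side t m n|.
  exact: proper_card (edge_side_proper tree_t tmn' n'n).
by apply: IHs tmn' side_v' side_w' evw; apply: leq_trans lt_side lt_s.
Qed.

Lemma connect_bag v n : v \in bag n -> connect (bag_edge v) n (lam v).
Proof.
case/bagP => [<-|[m [w [tnm side_v side_w evw]]]]; first exact: connect0.
exact: connect_bag_toward (ltnSn _) tnm side_v side_w evw.
Qed.

Lemma bag_tree_decomposition : tree_decomposition e t bag.
Proof.
split=> //; [by move=> v; exists (lam v); apply: mem_bag_lam | exact: bag_cover_edge |].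
move=> v a b va vb; apply: connect_trans (connect_bag va) _.
by rewrite (sym_connect_sym (bag_edge_sym v t_sym)) connect_bag.
Qed.

End Bags.

Lemma alpha_tw_le_card (V : finType) (e : rel V) w : #|V| <= w -> alpha_tw_le e w.
Proof.
move=> le_w; exists unit, [rel _ _ | false], (fun=> setT); split; last first.
  by move=> _; rewrite (leq_trans (alpha_le_card _ _)) // cardsT.
split.
- split=> //; [by rewrite card_unit | by move=> [] []; apply: connect0 |].
  by move=> [[] [[|? [|? ?]] /and4P []]].
- by exists tt; rewrite inE.
- by move=> u v _; exists tt; rewrite !inE.
- by move=> v [] [] _ _; apply: connect0.
Qed.

Theorem theorem8p2 (d k : nat) (V : finType) (e : rel V) :
  0 < d -> 0 < k -> simple_graph e ->
  alpha_star e <= d -> rankwidth_le e k ->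
  alpha_tw_le e (3 * d * k).
Proof.
move=> d_gt0 k_gt0 [e_sym _] le_d [small | [N [t [lam [rd width]]]]].
  by apply: alpha_tw_le_card; rewrite (leq_trans small) // !muln_gt0 d_gt0 k_gt0.
exists N, t, (bag e t lam); split; first by apply: bag_tree_decomposition; case: rd.
by move=> n; apply: alpha_bag_rank_decomposition; rewrite ?muln_gt0 ?d_gt0.
Qed.
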